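(* Let $D$ and $H$ be finite sets of doctors and hospitals with $|D|\ge 2$ and $|H|\ge 2$. An interview arrangement $(\iota,\kappa)$ is globally adequate (i.e., adequate at every preference profile $P$) if and only if either (1) $\kappa_d=1$ for every $d\in D$ and $\iota_h=1$ for every $h\in H$, or (2) $\kappa_d\ge\min\{|D|,|H|\}$ for every $d\in D$ and $\iota_h\ge\min\{|D|,|H|\}$ for every $h\in H$.
   Context: Each $h\in H$ has a strict preference $P_h$ over $D\cup\{h\}$ and each $d\in D$ a strict preference $P_d$ over $H\cup\{d\}$ (ranking below oneself means unacceptable); a profile $P$ collects these, and $\mathcal P$ is the set of all profiles. A matching is $\mu:H\cup D\to H\cup D$ with $\mu(h)\in D\cup\{h\}$, $\mu(d)\in H\cup\{d\}$, and $\mu(d)=h$ iff $\mu(h)=d$; it is stable if there is no pair $(d,h)$ with $h\mathrel{P_d}\mu(d)$ and $d\mathrel{P_h}\mu(h)$. An interview arrangement is $(\iota,\kappa)$ with $\iota_h\in\mathbb N$ the interview capacity of each $h\in H$ and $\kappa_d\in\mathbb N$ that of each $d\in D$. An interview matching is a many-to-many matching $\nu$ ($\nu(d)\subseteq H$, $\nu(h)\subseteq D$, $h\in\nu(d)$ iff $d\in\nu(h)$) with $|\nu(d)|\le\kappa_d$, $|\nu(h)|\le\iota_h$. The $(\iota,\kappa)$-matching at $P$ is obtained in two steps. Step 1: $\nu$ is the hospital-optimal pairwise stable interview matching, computed by hospital-proposing deferred acceptance in which each agent's choice from a set of proposals is its acceptable partners in that set if at most its capacity many, otherwise its capacity-many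 best according to its preference. Step 2: the final matching is the outcome of doctor-proposing deferred acceptance with each agent's preference restricted to $\nu$ (agent $i$ ranks only agents in $\nu(i)$, in the order of $P_i$ and only if acceptable; all others unacceptable). $(\iota,\kappa)$ is adequate at $P$ if the $(\iota,\kappa)$-matching at $P$ is stable with respect to $P$, and globally adequate if adequate at every $P\in\mathcal P$. *)

From mathcomp Require Import all_boot.
Set Implicit Arguments. Unset Strict Implicit. Unset Printing Implicit Defensive.

(* A strict preference of hospital h over D ∪ {h} is encoded by an injective
   rank function on [option D] ([None] = h itself); smaller rank = better.
   Likewise for doctors over H ∪ {d}. *)
Record profile (D H : finType) := Profile {
  rkH : H -> option D -> nat;
  rkD : D -> option H -> nat;
  rkH_inj : forall h, injective (rkH h);
  rkD_inj : forall d, injective (rkD d)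
}.

Section Prefs.
Variables (D H : finType) (P : profile D H).
Definition prefH (h : H) (x y : option D) : bool := rkH P h x < rkH P h y.
Definition prefD (d : D) (x y : option H) : bool := rkD P d x < rkD P d y.
Definition accH (h : H) (d : D) : bool := prefH h (Some d) None.
Definition accD (d : D) (h : H) : bool := prefD d (Some h) None.
End Prefs.

(* State: the set R of pairs (a,b) where b has
   rejected a.  The rejection set only grows, so after #|A|*#|B|+1 rounds the
   procedure has stopped; the outcome is the set of held proposals. *)
Section DA.
Variables (A B : finType)
  (rA : A -> B -> nat) (accA : A -> B -> bool) (capA : A -> nat)
  (rB : B -> A -> nat) (accB : B -> A -> bool) (capB : B -> nat).

Definition best (k : nat) (T : Type) (r : T -> nat) (s : seq T) : seq T :=
  take k (sort (fun x y => r x <= r y) s).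

Definition da_propose (R : {set A * B}) (a : A) : seq B :=
  best (capA a) (rA a) [seq b <- enum B | accA a b && ((a, b) \notin R)].

Definition da_hold (R : {set A * B}) (b : B) : seq A :=
  best (capB b) (rB b) [seq a <- enum A | (b \in da_propose R a) && accB b a].

Definition da_step (R : {set A * B}) : {set A * B} :=
  R :|: [set p | (p.2 \in da_propose R p.1) && (p.1 \notin da_hold R p.2)].

Definition da_rejections : {set A * B} := iter (#|A| * #|B|).+1 da_step set0.

Definition da_outcome (b : B) : seq A := da_hold da_rejections b.
End DA.

Section Arrangement.
Variables (D H : finType) (iota : H -> nat) (kappa : D -> nat) (P : profile D H).

(* Step 1: hospital-proposing DA; nu d = interview partners of doctor d. *)
Definition interview_nu (d : D) : seq H :=
  da_outcome (fun h => rkH P h \o Some) (accH P) iota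
             (fun d => rkD P d \o Some) (accD P) kappa d.
Definition interview_nuH (h : H) : seq D :=
  [seq d <- enum D | h \in interview_nu d].

(* Step 2: doctor-proposing DA with preferences restricted to nu. *)
Definition accD_nu (d : D) (h : H) : bool := (h \in interview_nu d) && accD P d h.
Definition accH_nu (h : H) (d : D) : bool := (d \in interview_nuH h) && accH P h d.

Definition step2_held (h : H) : seq D :=
  da_outcome (fun d => rkD P d \o Some) accD_nu (fun _ => 1)
             (fun h => rkH P h \o Some) accH_nu (fun _ => 1) h.

(* final matching: None means matched to oneself *)
Definition final_muH (h : H) : option D := ohead (step2_held h).
Definition final_muD (d : D) : option H := [pick h | d \in step2_held h].
End Arrangement.

Definition stable (D H : finType) (P : profile D H)
  (muD : D -> option H) (muH : H -> option D) : Prop :=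
  ~ exists (d : D) (h : H), prefD P d (Some h) (muD d) && prefH P h (Some d) (muH h).

Definition adequate (D H : finType) (iota : H -> nat) (kappa : D -> nat)
  (P : profile D H) : Prop :=
  stable P (final_muD iota kappa P) (final_muH iota kappa P).

Definition globally_adequate (D H : finType) (iota : H -> nat) (kappa : D -> nat)
  : Prop := forall P : profile D H, adequate iota kappa P.

(* Both steps are deferred acceptance, whose outcome respects capacities, is individually
   rational and is pairwise stable: if a mutually acceptable pair is not matched, one of the
   two is filled up with partners it prefers.  Hence a pair (d, h) blocking the final
   matching never interviewed, so after step 1 either d holds kappa d interviews it prefers
   to h or h holds iota h interviews it prefers to d; stability of step 2 on interview pairs
   then matches each of these better partners, injectively, to someone other than d
   (resp. h).  With unit capacities that someone would need a second interview; with
   capacities at least min(|D|, |H|) there are too few such partners on both sides.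
   Conversely, if neither condition holds, counting yields a doctor (or a hospital) with
   capacity below min(|D|, |H|) and a profile in which step 1 fills its interview slots
   with agents that are all matched to dedicated rivals in step 2; it then stays single,
   next to a single acceptable agent it never interviewed. *)

From mathcomp Require Import all_boot.
From mathcomp Require Import zify.
Set Implicit Arguments. Unset Strict Implicit. Unset Printing Implicit Defensive.

Lemma count_uniq_card (T : finType) (p : pred T) (s : seq T) :
  uniq s -> count p s = #|[pred x | (x \in s) && p x]|.
Proof.
move=> us; rewrite -size_filter -(card_uniqP (filter_uniq p us)).
by apply: eq_card => x; rewrite !inE mem_filter andbC.
Qed.

Section Best.
Variables (T : eqType) (r : T -> nat).
Hypothesis r_inj : injective r.

Local Notation le := (fun x y : T => r x <= r y).
Local Notation better x := (fun y => r y < r x).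

Lemma index_sorted_rank (l : seq T) x : sorted le l -> uniq l -> x \in l ->
  index x l = count (better x) l.
Proof.
have le_trans : transitive le by move=> ? ? ?; apply: leq_trans.
elim: l => [//|a l IH] /= sorted_al /andP[al ul]; rewrite in_cons.
have a_le : all (le a) l := order_path_min le_trans sorted_al.
have sorted_l : sorted le l by move: sorted_al; case: l {IH al ul a_le} => //= b l /andP[].
case: (eqVneq a x) => [<- _|ne /= xl].
  rewrite ltnn add0n; symmetry; apply/eqP; rewrite -leqn0 leqNgt -has_count.
  by apply/hasP => -[y /(allP a_le)]; rewrite /= leqNgt => /negP.
rewrite IH // -add1n; congr (_ + _).
move/allP: a_le => /(_ x xl); rewrite leq_eqVlt => /orP[/eqP e|->//].
by move: ne; rewrite (r_inj e) eqxx.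
Qed.

Lemma mem_best k s x : uniq s ->
  (x \in best k r s) = (x \in s) && (count (better x) s < k).
Proof.
move=> us; rewrite /best.
have ms : (x \in sort le s) = (x \in s) by rewrite mem_sort.
case xs: (x \in s); last by apply/negbTE; apply: contraFN xs => /mem_take; rewrite ms.
rewrite in_take ?ms // index_sorted_rank ?ms ?sort_uniq //; last first.
  by apply: sort_sorted => x' y'; apply: leq_total.
by rewrite (permP (permEl (perm_sort le s))).
Qed.

Lemma uniq_best k s : uniq s -> uniq (best k r s).
Proof. by move=> us; rewrite /best take_uniq // sort_uniq. Qed.

Lemma size_best k s : size (best k r s) <= k.
Proof. by rewrite /best size_take_min size_sort geq_minl. Qed.

Lemma best_count_better k s x : uniq s -> k <= count (better x) s ->
  k <= count (better x) (best k r s).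
Proof.
move=> us hk.
have all_better : all (better x) (best k r s).
  apply/allP => y; rewrite mem_best // => /andP[_ cy] /=; rewrite ltnNge.
  apply: contraL cy => xy; rewrite -leqNgt (leq_trans hk) //.
  by apply: sub_count => z /= zx; apply: leq_trans zx xy.
have -> : count (better x) (best k r s) = size (best k r s).
  by apply/eqP; rewrite -all_count.
by rewrite /best size_takel // size_sort (leq_trans hk) ?count_size.
Qed.

Lemma notin_best_count_better k s x : uniq s -> x \in s -> x \notin best k r s ->
  k <= count (better x) (best k r s).
Proof.
move=> us xs; rewrite mem_best // xs -leqNgt; exact: best_count_better.
Qed.
End Best.

Section DeferredAcceptance.
Variables (A B : finType)
  (rA : A -> B -> nat) (accA : A -> B -> bool) (capA : A -> nat)
  (rB : B -> A -> nat) (accB : B -> A -> bool) (capB : B -> nat).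
Hypotheses (rA_inj : forall a, injective (rA a)) (rB_inj : forall b, injective (rB b)).

Implicit Type R : {set A * B}.

Local Notation propose := (da_propose rA accA capA).
Local Notation hold := (da_hold rA accA capA rB accB capB).
Local Notation step := (da_step rA accA capA rB accB capB).
Local Notation rejections := (da_rejections rA accA capA rB accB capB).
Local Notation outcome := (da_outcome rA accA capA rB accB capB).

Definition da_available R a :=
  [seq b <- enum B | accA a b && ((a, b) \notin R)].
Definition da_proposers R b :=
  [seq a <- enum A | (b \in propose R a) && accB b a].

Lemma uniq_da_available R a : uniq (da_available R a).
Proof. by rewrite filter_uniq ?enum_uniq. Qed.

Lemma uniq_da_proposers R b : uniq (da_proposers R b).
Proof. by rewrite filter_uniq ?enum_uniq. Qed.

Lemma mem_da_available R a b : (b \in da_available R a) = accA a b && ((a, b) \notin R).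
Proof. by rewrite mem_filter mem_enum andbT. Qed.

Lemma mem_da_proposers R a b : (a \in da_proposers R b) = (b \in propose R a) && accB b a.
Proof. by rewrite mem_filter mem_enum andbT. Qed.

Lemma mem_propose R a b : (b \in propose R a) =
  (b \in da_available R a) &&
  (count (fun b' => rA a b' < rA a b) (da_available R a) < capA a).
Proof. by rewrite /da_propose mem_best // uniq_da_available. Qed.

Lemma mem_hold R a b : (a \in hold R b) =
  (a \in da_proposers R b) &&
  (count (fun a' => rB b a' < rB b a) (da_proposers R b) < capB b).
Proof. by rewrite /da_hold mem_best // uniq_da_proposers. Qed.

Lemma mem_step R p :
  (p \in step R) = (p \in R) || (p.2 \in propose R p.1) && (p.1 \notin hold R p.2).
Proof. by rewrite !inE. Qed.

Lemma subset_step R : R \subset step R.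
Proof. by apply/subsetP => p pR; rewrite mem_step pR. Qed.

(* The rejection set grows strictly until it is stationary, and it has at most
   #|A| * #|B| elements. *)
Lemma step_rejections : step rejections = rejections.
Proof.
have grow n : n <= #|iter n step set0| \/ step (iter n step set0) = iter n step set0.
  elim: n => [|n [IH|IH]]; [by left | | by right; rewrite /= IH].
  have [fix_n|moves] := eqVneq (step (iter n step set0)) (iter n step set0).
    by right; rewrite /= fix_n.
  left; apply: leq_ltn_trans IH (proper_card _).
  by rewrite properEneq eq_sym moves subset_step.
have [big|//] := grow (#|A| * #|B|).+1.
by move: (leq_trans big (max_card _)); rewrite card_prod ltnn.
Qed.

Lemma propose_rejections a b : (b \in propose rejections a) = (a \in outcome b).
Proof.
apply/idP/idP => [bp|]; last by rewrite mem_hold mem_da_proposers => /andP[/andP[]].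
apply/negPn/negP => nh; have : (a, b) \in step rejections by rewrite mem_step bp nh orbT.
by rewrite step_rejections => abR; move: bp; rewrite mem_propose mem_da_available abR andbF.
Qed.

Definition holds_better R b a := capB b <= count (fun a' => rB b a' < rB b a) (hold R b).

Definition rejections_justified R :=
  forall a b, (a, b) \in R -> accB b a -> holds_better R b a.

Lemma hold_proposers_step R a b : a \in hold R b -> a \in da_proposers (step R) b.
Proof.
move=> ah; move: (ah); rewrite mem_hold mem_da_proposers => /andP[/andP[bp acc] _].
rewrite mem_da_proposers acc andbT.
move: (bp); rewrite !mem_propose !mem_da_available => /andP[/andP[acA nR] cnt].
rewrite acA mem_step /= negb_or nR ah andbF /=.
apply: leq_ltn_trans cnt; rewrite /da_available !count_filter; apply: sub_count => b' /=.
case/andP=> /and3P[-> -> nR'] ->; rewrite andbT /=; apply: contraNN nR'.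
exact: (subsetP (subset_step R)).
Qed.

Lemma uniq_hold R b : uniq (hold R b).
Proof. exact: uniq_best (uniq_da_proposers R b). Qed.

Lemma holds_better_step R a b : holds_better R b a -> holds_better (step R) b a.
Proof.
rewrite /holds_better => hb.
apply: (best_count_better (@rB_inj b) (uniq_da_proposers _ b)).
apply: leq_trans hb _.
rewrite !count_uniq_card ?uniq_hold ?uniq_da_proposers //.
by apply/subset_leq_card/subsetP => a'; rewrite !inE => /andP[/hold_proposers_step -> ->].
Qed.

Lemma rejections_justified_step R : rejections_justified R -> rejections_justified (step R).
Proof.
move=> just a b; rewrite mem_step /= => /orP[abR|/andP[bp nh]] acc; apply: holds_better_step.
  exact: just.
apply: (notin_best_count_better (@rB_inj b) (uniq_da_proposers R b) _ nh).
by rewrite mem_da_proposers bp.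
Qed.

Lemma rejections_justified_final : rejections_justified rejections.
Proof.
rewrite /da_rejections; elim: (_.+1) => [|n IH] /=; last exact: rejections_justified_step.
by move=> a b; rewrite inE.
Qed.

Lemma da_outcome_acc a b : a \in outcome b -> accA a b && accB b a.
Proof.
rewrite mem_hold mem_da_proposers => /andP[/andP[bp ->] _].
by move: bp; rewrite mem_propose mem_da_available => /andP[/andP[->]].
Qed.

Lemma card_da_outcome b : #|outcome b| <= capB b.
Proof. exact: leq_trans (card_size _) (size_best _ _ _). Qed.

Lemma card_da_partners a : #|[pred b | a \in outcome b]| <= capA a.
Proof.
have -> : #|[pred b | a \in outcome b]| = #|propose rejections a|.
  by apply: eq_card => b; rewrite inE propose_rejections.
exact: leq_trans (card_size _) (size_best _ _ _).
Qed.

Lemma da_outcome_pairwise_stable a b : accA a b -> accB b a -> a \notin outcome b ->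
  capB b <= #|[pred a' | (a' \in outcome b) && (rB b a' < rB b a)]| \/
  capA a <= #|[pred b' | (a \in outcome b') && (rA a b' < rA a b)]|.
Proof.
move=> accAab accBba nab; have [abR|abR] := boolP ((a, b) \in rejections).
  by left; rewrite -count_uniq_card ?uniq_hold //; exact: rejections_justified_final.
right; have -> : #|[pred b' | (a \in outcome b') && (rA a b' < rA a b)]| =
                 count (fun b' => rA a b' < rA a b) (propose rejections a).
  rewrite count_uniq_card; last exact: uniq_best (uniq_da_available _ a).
  by apply: eq_card => b'; rewrite !inE propose_rejections.
apply: (notin_best_count_better (@rA_inj a) (uniq_da_available _ a)).
  by rewrite mem_da_available accAab.
by rewrite propose_rejections.
Qed.
End DeferredAcceptance.

Section InterviewMatching.
Variables (D H : finType) (iota : H -> nat) (kappa : D -> nat) (P : profile D H).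

Local Notation nu := (interview_nu iota kappa P).
Local Notation held := (step2_held iota kappa P).
Local Notation muD := (final_muD iota kappa P).
Local Notation muH := (final_muH iota kappa P).

Lemma rkH_some_inj h : injective (rkH P h \o Some).
Proof. by move=> x y /rkH_inj [->]. Qed.

Lemma rkD_some_inj d : injective (rkD P d \o Some).
Proof. by move=> x y /rkD_inj [->]. Qed.

Lemma interview_acc d h : h \in nu d -> accD P d h && accH P h d.
Proof. by move/(da_outcome_acc rkH_some_inj rkD_some_inj); rewrite andbC. Qed.

Lemma card_interview_nu d : #|nu d| <= kappa d.
Proof. exact: card_da_outcome. Qed.

Lemma card_interviewees h : #|[pred d | h \in nu d]| <= iota h.
Proof. exact: card_da_partners rkH_some_inj rkD_some_inj h. Qed.

Lemma interview_pairwise_stable d h : accD P d h -> accH P h d -> h \notin nu d ->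
  kappa d <= #|[pred h' | (h' \in nu d) && prefD P d (Some h') (Some h)]| \/
  iota h <= #|[pred d' | (h \in nu d') && prefH P h (Some d') (Some d)]|.
Proof.
move=> accDdh accHhd.
exact: (da_outcome_pairwise_stable rkH_some_inj rkD_some_inj accHhd accDdh).
Qed.

Lemma interview_of_few_better d h : accD P d h -> accH P h d ->
  #|[pred h' | prefD P d (Some h') (Some h)]| < kappa d ->
  #|[pred d' | prefH P h (Some d') (Some d)]| < iota h -> h \in nu d.
Proof.
move=> accDdh accHhd few_d few_h; apply/negPn/negP.
case/(interview_pairwise_stable accDdh accHhd) => [full|full].
  suff : kappa d < kappa d by rewrite ltnn.
  apply: leq_ltn_trans full (leq_ltn_trans _ few_d).
  by apply/subset_leq_card/subsetP => h'; rewrite !inE => /andP[].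
suff : iota h < iota h by rewrite ltnn.
apply: leq_ltn_trans full (leq_ltn_trans _ few_h).
by apply/subset_leq_card/subsetP => d'; rewrite !inE => /andP[].
Qed.

Lemma accD_nuE d h : accD_nu iota kappa P d h = (h \in nu d).
Proof. by rewrite /accD_nu; case hn: (h \in nu d) => //; case/andP: (interview_acc hn). Qed.

Lemma accH_nuE h d : accH_nu iota kappa P h d = (h \in nu d).
Proof.
rewrite /accH_nu /interview_nuH mem_filter mem_enum andbT.
by case hn: (h \in nu d) => //; case/andP: (interview_acc hn).
Qed.

Lemma held_interview d h : d \in held h -> h \in nu d.
Proof. by move/(da_outcome_acc rkD_some_inj rkH_some_inj); rewrite accD_nuE => /andP[]. Qed.

Lemma final_muH_eq h d : muH h = Some d <-> d \in held h.
Proof.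
have : #|held h| <= 1 by exact: card_da_outcome.
rewrite /final_muH; case: (held h) => [|x s] le1 /=; first by split.
split=> [[<-]|ds]; first exact: mem_head.
by congr Some; move/card_le1_eqP: le1; apply; rewrite ?mem_head.
Qed.

Lemma final_muD_eq d h : muD d = Some h <-> d \in held h.
Proof.
rewrite /final_muD; case: pickP => [h' dh'|none] /=; last first.
  by split=> // dh; move: (none h); rewrite /= dh.
have le1 : #|[pred h | d \in held h]| <= 1.
  exact: card_da_partners _ _ _ _ rkD_some_inj rkH_some_inj d.
by split=> [[<-]//|dh]; congr Some; move/card_le1_eqP: le1; apply.
Qed.

Lemma final_muDH d h : muD d = Some h <-> muH h = Some d.
Proof. by rewrite final_muD_eq final_muH_eq. Qed.

Lemma final_muD_interview d h : muD d = Some h -> h \in nu d.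
Proof. by move/final_muD_eq/held_interview. Qed.

Lemma final_muH_interview h d : muH h = Some d -> h \in nu d.
Proof. by move/final_muH_eq/held_interview. Qed.

Lemma final_muD_inj d d' h : muD d = Some h -> muD d' = Some h -> d = d'.
Proof. by move=> /final_muDH e /final_muDH; rewrite e => -[]. Qed.

Lemma final_muH_inj h h' d : muH h = Some d -> muH h' = Some d -> h = h'.
Proof. by move=> /final_muDH e /final_muDH; rewrite e => -[]. Qed.

Lemma interview_pair_stable d h : h \in nu d ->
  prefH P h (muH h) (Some d) \/ ~~ prefD P d (Some h) (muD d).
Proof.
move=> hn; have [dh|ndh] := boolP (d \in held h).
  by right; move/final_muD_eq: dh => ->; rewrite /prefD ltnn.
have accD2 : accD_nu iota kappa P d h by rewrite accD_nuE.
have accH2 : accH_nu iota kappa P h d by rewrite accH_nuE.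
case: (da_outcome_pairwise_stable rkD_some_inj rkH_some_inj accD2 accH2 ndh).
  by case/card_gt0P => d' /andP[/final_muH_eq -> better]; left.
case/card_gt0P => h' /andP[/final_muD_eq -> better]; right.
by rewrite /prefD -leqNgt ltnW.
Qed.

Lemma blocking_accD d h : prefD P d (Some h) (muD d) -> accD P d h.
Proof.
rewrite /accD /prefD; case E: (muD d) => [h'|//] lt.
by case/andP: (interview_acc (final_muD_interview E)) => acc _; apply: ltn_trans lt acc.
Qed.

Lemma blocking_accH h d : prefH P h (Some d) (muH h) -> accH P h d.
Proof.
rewrite /accH /prefH; case E: (muH h) => [d'|//] lt.
by case/andP: (interview_acc (final_muH_interview E)) => _ acc; apply: ltn_trans lt acc.
Qed.

Lemma blocking_not_interview d h :
  prefD P d (Some h) (muD d) -> prefH P h (Some d) (muH h) -> h \notin nu d.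
Proof.
move=> pd ph; apply/negP => /interview_pair_stable [ph'|/negP//].
by move: (ltn_trans ph ph'); rewrite ltnn.
Qed.

Lemma blocking_full_side d h :
  prefD P d (Some h) (muD d) -> prefH P h (Some d) (muH h) ->
  kappa d <= #|[pred h' | (h' \in nu d) && prefD P d (Some h') (Some h)]| \/
  iota h <= #|[pred d' | (h \in nu d') && prefH P h (Some d') (Some d)]|.
Proof.
move=> pd ph; apply: interview_pairwise_stable (blocking_not_interview pd ph).
  exact: blocking_accD pd.
exact: blocking_accH ph.
Qed.

Lemma better_interviewer_matched d h h' :
  prefD P d (Some h) (muD d) -> h' \in nu d -> prefD P d (Some h') (Some h) ->
  exists2 d', muH h' = Some d' & prefH P h' (Some d') (Some d).
Proof.
move=> pd h'n better.
case: (interview_pair_stable h'n) => [|/negP[]]; last exact: ltn_trans better pd.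
case E: (muH h') => [d'|] ph; first by exists d'.
by case/andP: (interview_acc h'n) => _ acc; move: (ltn_trans ph acc); rewrite ltnn.
Qed.

Lemma better_interviewee_matched d h d' :
  prefH P h (Some d) (muH h) -> h \in nu d' -> prefH P h (Some d') (Some d) ->
  exists2 h', muD d' = Some h' & h' != h.
Proof.
move=> ph hn better; case: (interview_pair_stable hn) => [ph'|].
  by move: (ltn_trans ph' (ltn_trans better ph)); rewrite ltnn.
case E: (muD d') => [h'|] pd; last first.
  by case/andP: (interview_acc hn) => acc _; move: pd; rewrite -/(accD P d' h) acc.
exists h' => //; apply/eqP => eh; move: E; rewrite eh => /final_muDH e.
by move: (ltn_trans better ph); rewrite e ltnn.
Qed.

Lemma favourites_matched d h : 0 < kappa d -> 0 < iota h ->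
  (forall o, ~~ prefD P d o (Some h)) -> (forall o, ~~ prefH P h o (Some d)) ->
  muD d = Some h.
Proof.
move=> kd ih favd favh.
have top_acc T (r : option T -> nat) x :
    injective r -> ~~ (r None < r (Some x)) -> r (Some x) < r None.
  by move=> r_inj; rewrite -leqNgt leq_eqVlt => /orP[/eqP/r_inj|].
have hn : h \in nu d.
  apply: interview_of_few_better.
  - exact: top_acc (@rkD_inj _ _ P d) (favd None).
  - exact: top_acc (@rkH_inj _ _ P h) (favh None).
  - by rewrite eq_card0 // => h'; rewrite !inE (negbTE (favd _)).
  - by rewrite eq_card0 // => d'; rewrite !inE (negbTE (favh _)).
case: (interview_pair_stable hn) => [|pd]; first by rewrite (negbTE (favh _)).
have := favd (muD d); rewrite /prefD -!leqNgt in pd * => fav.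
by apply: (@rkD_inj _ _ P d); apply/eqP; rewrite eqn_leq pd fav.
Qed.
End InterviewMatching.

Lemma card_lt_of_partial_inj (T U : finType) (A : {pred T}) (f : T -> option U) (u : U) :
  (forall x, x \in A -> exists2 y, f x = Some y & y != u) ->
  (forall x x' y, f x = Some y -> f x' = Some y -> x = x') -> #|A| < #|U|.
Proof.
move=> fA f_inj; pose g x := odflt u (f x).
have g_inj : {in A &, injective g}.
  move=> x x' /fA[y ey _] /fA[y' ey' _]; rewrite /g ey ey' /= => eyy'.
  by apply: f_inj ey _; rewrite ey' eyy'.
rewrite -(card_in_imset g_inj); apply: leq_ltn_trans (_ : #|[set~ u]| < _).
  apply/subset_leq_card/subsetP => _ /imsetP[x xA ->].
  by have [y ey yu] := fA x xA; rewrite !inE /g ey.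
by rewrite cardsC1 ltn_predL; apply/card_gt0P; exists u.
Qed.

Section Sufficiency.
Variables (D H : finType) (iota : H -> nat) (kappa : D -> nat) (P : profile D H).

Local Notation nu := (interview_nu iota kappa P).
Local Notation muD := (final_muD iota kappa P).
Local Notation muH := (final_muH iota kappa P).

Lemma card_better_interviewers_lt d h : prefD P d (Some h) (muD d) ->
  #|[pred h' | (h' \in nu d) && prefD P d (Some h') (Some h)]| < minn #|D| #|H|.
Proof.
move=> pd; rewrite leq_min; apply/andP; split.
  apply: (card_lt_of_partial_inj (f := muH) (u := d)); last exact: final_muH_inj.
  move=> h'; rewrite inE => /andP[h'n better].
  have [d' e pd'] := better_interviewer_matched pd h'n better.
  by exists d' => //; apply: contraTneq pd' => ->; rewrite /prefH ltnn.
apply: (card_lt_of_partial_inj (f := Some) (u := h)) => [h'|]; last by move=> ? ? ? [->] [].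
rewrite inE => /andP[_ better]; exists h' => //.
by apply: contraTneq better => ->; rewrite /prefD ltnn.
Qed.

Lemma card_better_interviewees_lt h d : prefH P h (Some d) (muH h) ->
  #|[pred d' | (h \in nu d') && prefH P h (Some d') (Some d)]| < minn #|D| #|H|.
Proof.
move=> ph; rewrite leq_min; apply/andP; split.
  apply: (card_lt_of_partial_inj (f := Some) (u := d)) => [d'|]; last by move=> ? ? ? [->] [].
  rewrite inE => /andP[_ better]; exists d' => //.
  by apply: contraTneq better => ->; rewrite /prefH ltnn.
apply: (card_lt_of_partial_inj (f := muD) (u := h)); last exact: final_muD_inj.
move=> d'; rewrite inE => /andP[hn better].
exact: better_interviewee_matched ph hn better.
Qed.

Lemma adequate_of_capacities_ge_min :
  (forall d, minn #|D| #|H| <= kappa d) -> (forall h, minn #|D| #|H| <= iota h) ->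
  adequate iota kappa P.
Proof.
move=> kn inn [d [h /andP[pd ph]]]; case: (blocking_full_side pd ph) => full.
  by move: (leq_trans (kn d) full); rewrite leqNgt card_better_interviewers_lt.
by move: (leq_trans (inn h) full); rewrite leqNgt card_better_interviewees_lt.
Qed.

Lemma adequate_of_unit_capacities :
  (forall d, kappa d = 1) -> (forall h, iota h = 1) -> adequate iota kappa P.
Proof.
move=> k1 i1 [d [h /andP[pd ph]]].
case: (blocking_full_side pd ph); rewrite ?k1 ?i1 => /card_gt0P.
  case=> h'; rewrite inE => /andP[h'n better].
  have [d' e pd'] := better_interviewer_matched pd h'n better.
  have /card_le1_eqP one : #|[pred x | h' \in nu x]| <= 1 by rewrite -(i1 h') card_interviewees.
  by move: pd'; rewrite (one d d' h'n (final_muH_interview e)) /prefH ltnn.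
case=> d'; rewrite inE => /andP[hn better].
have [h'' e neq] := better_interviewee_matched ph hn better.
have /card_le1_eqP one : #|nu d'| <= 1 by rewrite -(k1 d') card_interview_nu.
by move: neq; rewrite (one h h'' hn (final_muD_interview e)) eqxx.
Qed.
End Sufficiency.

Definition list_rank (T : finType) (L : seq T) (o : option T) : nat :=
  if o is Some y then (if y \in L then index y L else (size L).+1 + enum_rank y)
  else size L.

Lemma list_rank_inj (T : finType) (L : seq T) : injective (list_rank L).
Proof.
have idx z : z \in L -> index z L < size L by rewrite index_mem.
move=> [x|] [y|] //=; last 2 first.
- by case: ifP => [/idx|_]; lia.
- by case: ifP => [/idx|_]; lia.
case: ifP => [/[dup] xL /idx|_]; case: ifP => [/[dup] yL /idx|_]; try lia.
- by move=> _ _ e; rewrite -(nth_index x xL) e nth_index.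
- by move/addnI/ord_inj/enum_rank_inj => ->.
Qed.

Lemma list_rank_lt_none (T : finType) (L : seq T) y :
  (list_rank L (Some y) < list_rank L None) = (y \in L).
Proof. by rewrite /=; case: ifP => yL; [rewrite index_mem | apply/negbTE; lia]. Qed.

Lemma card_list_rank_better (T : finType) (L : seq T) x : x \in L ->
  #|[pred y | list_rank L (Some y) < list_rank L (Some x)]| <= index x L.
Proof.
move=> xL; have sub : [pred y | list_rank L (Some y) < list_rank L (Some x)] \subset
                      take (index x L) L.
  apply/subsetP => y; rewrite inE /= xL; case: ifP => yL lt; first by rewrite in_take.
  by exfalso; move: lt (index_size x L); move: (size L) => n; lia.
apply: leq_trans (subset_leq_card sub) (leq_trans (card_size _) _).
by rewrite size_take_min geq_minl.
Qed.

Section ListProfile.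
Variables (D H : finType) (LH : H -> seq D) (LD : D -> seq H).

Definition list_profile : profile D H :=
  Profile (fun h => @list_rank_inj D (LH h)) (fun d => @list_rank_inj H (LD d)).

Lemma accH_list_profile h d : accH list_profile h d = (d \in LH h).
Proof. exact: list_rank_lt_none. Qed.

Lemma accD_list_profile d h : accD list_profile d h = (h \in LD d).
Proof. exact: list_rank_lt_none. Qed.

Lemma card_better_list_profileH h d : d \in LH h ->
  #|[pred d' | prefH list_profile h (Some d') (Some d)]| <= index d (LH h).
Proof. exact: card_list_rank_better. Qed.

Lemma card_better_list_profileD d h : h \in LD d ->
  #|[pred h' | prefD list_profile d (Some h') (Some h)]| <= index h (LD d).
Proof. exact: card_list_rank_better. Qed.

Lemma list_profile_topH h d L : LH h = d :: L -> forall o, ~~ prefH list_profile h o (Some d).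
Proof. by move=> e o; rewrite /prefH /= e mem_head /= eqxx ltn0. Qed.

Lemma list_profile_topD d h L : LD d = h :: L -> forall o, ~~ prefD list_profile d o (Some h).
Proof. by move=> e o; rewrite /prefD /= e mem_head /= eqxx ltn0. Qed.
End ListProfile.

Section ShortDoctor.
Variables (D H : finType) (iota : H -> nat) (kappa : D -> nat).
Variables (d0 : D) (h0 : H) (gs : seq H) (es : seq D).
Hypotheses (gs_uniq : uniq gs) (size_gs : size gs = kappa d0) (h0_gs : h0 \notin gs).
Hypotheses (es_uniq : uniq es) (size_es : size es = kappa d0) (d0_es : d0 \notin es).
Hypotheses (iota_gs : forall g, g \in gs -> 1 < iota g).
Hypotheses (kappa_es : forall e, e \in es -> 0 < kappa e).

(* [d0] ranks [gs] and then [h0]; each [g] in [gs] ranks its partner [e] in [es] first and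
   then [d0], and [e] ranks only [g]; [h0] ranks only [d0].  Step 1 fills the [kappa d0]
   interview slots of [d0] with [gs], and in step 2 every [g] is taken by its partner. *)
Definition gs_partner g := nth d0 es (index g gs).

Definition short_doctor_LH h :=
  if h == h0 then [:: d0] else if h \in gs then [:: gs_partner h; d0] else [::].
Definition short_doctor_LD d :=
  if d == d0 then rcons gs h0 else if d \in es then [:: nth h0 gs (index d es)] else [::].
Definition short_doctor_profile := list_profile short_doctor_LH short_doctor_LD.

Local Notation P := short_doctor_profile.
Local Notation nu := (interview_nu iota kappa P).
Local Notation muD := (final_muD iota kappa P).
Local Notation muH := (final_muH iota kappa P).

Lemma gs_partner_es g : g \in gs -> gs_partner g \in es.
Proof. by move=> gg; rewrite /gs_partner mem_nth // size_es -size_gs index_mem. Qed.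

Lemma gs_partner_neq g : g \in gs -> gs_partner g != d0.
Proof. by move=> gg; apply: contraNneq d0_es => <-; apply: gs_partner_es. Qed.

Lemma short_doctor_LH_gs g : g \in gs -> short_doctor_LH g = [:: gs_partner g; d0].
Proof. by move=> gg; rewrite /short_doctor_LH gg; case: eqP gg h0_gs => // -> ->. Qed.

Lemma short_doctor_LD_partner g : g \in gs -> short_doctor_LD (gs_partner g) = [:: g].
Proof.
move=> gg; rewrite /short_doctor_LD (negbTE (gs_partner_neq gg)) gs_partner_es //.
by rewrite /gs_partner index_uniq ?nth_index // size_es -size_gs index_mem.
Qed.

Lemma gs_interview_d0 g : g \in gs -> g \in nu d0.
Proof.
move=> gg; have gL : g \in short_doctor_LD d0.
  by rewrite /short_doctor_LD eqxx mem_rcons inE gg orbT.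
have d0L : d0 \in short_doctor_LH g by rewrite short_doctor_LH_gs // !inE eqxx orbT.
apply: interview_of_few_better; rewrite ?accD_list_profile ?accH_list_profile //.
  apply: leq_ltn_trans (card_better_list_profileD _ gL) _.
  by rewrite /short_doctor_LD eqxx -cats1 index_cat gg -size_gs index_mem.
apply: leq_ltn_trans (card_better_list_profileH _ d0L) (leq_trans _ (iota_gs gg)).
by move: d0L; rewrite -index_mem short_doctor_LH_gs.
Qed.

Lemma h0_not_interview_d0 : h0 \notin nu d0.
Proof.
apply/negP => h0n; have : #|h0 :: gs| <= #|nu d0|.
  apply/subset_leq_card/subsetP => x; rewrite inE => /orP[/eqP->//|].
  exact: gs_interview_d0.
rewrite (card_uniqP _) /= ?h0_gs // size_gs => /leq_trans/(_ (card_interview_nu _ _ _ _)).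
by rewrite ltnn.
Qed.

Lemma short_doctor_muH_h0 : muH h0 = None.
Proof.
case E: (muH h0) => [x|//]; have xn := final_muH_interview E.
case/andP: (interview_acc xn) => _; rewrite accH_list_profile /short_doctor_LH eqxx inE.
by move/eqP => ex; move: xn; rewrite ex (negbTE h0_not_interview_d0).
Qed.

Lemma short_doctor_muD_d0 : muD d0 = None.
Proof.
case E: (muD d0) => [g|//]; have gn := final_muD_interview E.
have gg : g \in gs.
  case/andP: (interview_acc gn); rewrite accD_list_profile /short_doctor_LD eqxx mem_rcons inE.
  by case/orP => [/eqP eg|//]; move: gn; rewrite eg (negbTE h0_not_interview_d0).
have := favourites_matched (kappa_es (gs_partner_es gg)) (ltnW (iota_gs gg))
  (list_profile_topD _ (short_doctor_LD_partner gg)) (list_profile_topH _ (short_doctor_LH_gs gg)).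
by move/final_muD_inj/(_ E) => e; move: (gs_partner_neq gg); rewrite e eqxx.
Qed.

Lemma short_doctor_not_adequate : ~ adequate iota kappa P.
Proof.
apply; exists d0, h0; rewrite short_doctor_muD_d0 short_doctor_muH_h0.
rewrite -/(accD P d0 h0) -/(accH P h0 d0) accD_list_profile accH_list_profile.
by rewrite /short_doctor_LD /short_doctor_LH !eqxx mem_rcons !mem_head.
Qed.
End ShortDoctor.

Section ShortHospital.
Variables (D H : finType) (iota : H -> nat) (kappa : D -> nat).
Variables (h0 : H) (d1 : D) (fs : seq D) (cs : seq H).
Hypotheses (fs_uniq : uniq fs) (size_fs : size fs = iota h0) (d1_fs : d1 \notin fs).
Hypotheses (cs_uniq : uniq cs) (size_cs : size cs = iota h0) (h0_cs : h0 \notin cs).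
Hypotheses (kappa_fs : forall f, f \in fs -> 1 < kappa f).
Hypotheses (iota_cs : forall c, c \in cs -> 0 < iota c).

(* [h0] ranks [fs] and then [d1]; each [f] in [fs] ranks its partner [c] in [cs] first and
   then [h0], and [c] ranks only [f]; [d1] ranks only [h0].  Step 1 fills the [iota h0]
   interview slots of [h0] with [fs], and in step 2 every [f] takes its partner. *)
Definition fs_partner f := nth h0 cs (index f fs).

Definition short_hospital_LH h :=
  if h == h0 then rcons fs d1 else if h \in cs then [:: nth d1 fs (index h cs)] else [::].
Definition short_hospital_LD d :=
  if d == d1 then [:: h0] else if d \in fs then [:: fs_partner d; h0] else [::].
Definition short_hospital_profile := list_profile short_hospital_LH short_hospital_LD.

Local Notation P := short_hospital_profile.
Local Notation nu := (interview_nu iota kappa P).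
Local Notation muD := (final_muD iota kappa P).
Local Notation muH := (final_muH iota kappa P).

Lemma fs_partner_cs f : f \in fs -> fs_partner f \in cs.
Proof. by move=> ff; rewrite /fs_partner mem_nth // size_cs -size_fs index_mem. Qed.

Lemma fs_partner_neq f : f \in fs -> fs_partner f != h0.
Proof. by move=> ff; apply: contraNneq h0_cs => <-; apply: fs_partner_cs. Qed.

Lemma short_hospital_LD_fs f : f \in fs -> short_hospital_LD f = [:: fs_partner f; h0].
Proof. by move=> ff; rewrite /short_hospital_LD ff; case: eqP ff d1_fs => // -> ->. Qed.

Lemma short_hospital_LH_partner f : f \in fs -> short_hospital_LH (fs_partner f) = [:: f].
Proof.
move=> ff; rewrite /short_hospital_LH (negbTE (fs_partner_neq ff)) fs_partner_cs //.
by rewrite /fs_partner index_uniq ?nth_index // size_cs -size_fs index_mem.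
Qed.

Lemma h0_interview_fs f : f \in fs -> h0 \in nu f.
Proof.
move=> ff; have fL : f \in short_hospital_LH h0.
  by rewrite /short_hospital_LH eqxx mem_rcons inE ff orbT.
have h0L : h0 \in short_hospital_LD f by rewrite short_hospital_LD_fs // !inE eqxx orbT.
apply: interview_of_few_better; rewrite ?accD_list_profile ?accH_list_profile //.
  apply: leq_ltn_trans (card_better_list_profileD _ h0L) (leq_trans _ (kappa_fs ff)).
  by move: h0L; rewrite -index_mem short_hospital_LD_fs.
apply: leq_ltn_trans (card_better_list_profileH _ fL) _.
by rewrite /short_hospital_LH eqxx -cats1 index_cat ff -size_fs index_mem.
Qed.

Lemma h0_not_interview_d1 : h0 \notin nu d1.
Proof.
apply/negP => h0n; have : #|d1 :: fs| <= #|[pred d | h0 \in nu d]|.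
  apply/subset_leq_card/subsetP => x; rewrite !inE => /orP[/eqP->//|].
  exact: h0_interview_fs.
rewrite (card_uniqP _) /= ?d1_fs // size_fs => /leq_trans/(_ (card_interviewees _ _ _ _)).
by rewrite ltnn.
Qed.

Lemma short_hospital_muD_d1 : muD d1 = None.
Proof.
case E: (muD d1) => [h|//]; have hn := final_muD_interview E.
case/andP: (interview_acc hn); rewrite accD_list_profile /short_hospital_LD eqxx inE.
by move/eqP => eh; move: hn; rewrite eh (negbTE h0_not_interview_d1).
Qed.

Lemma short_hospital_muH_h0 : muH h0 = None.
Proof.
case E: (muH h0) => [f|//]; have h0n := final_muH_interview E.
have ff : f \in fs.
  case/andP: (interview_acc h0n) => _.
  rewrite accH_list_profile /short_hospital_LH eqxx mem_rcons inE.
  by case/orP => [/eqP ef|//]; move: h0n; rewrite ef (negbTE h0_not_interview_d1).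
have := favourites_matched (ltnW (kappa_fs ff)) (iota_cs (fs_partner_cs ff))
  (list_profile_topD _ (short_hospital_LD_fs ff))
  (list_profile_topH _ (short_hospital_LH_partner ff)).
move/final_muDH: E => ->; case=> e.
by move: (fs_partner_neq ff); rewrite -e eqxx.
Qed.

Lemma short_hospital_not_adequate : ~ adequate iota kappa P.
Proof.
apply; exists d1, h0; rewrite short_hospital_muD_d1 short_hospital_muH_h0.
rewrite -/(accD P d1 h0) -/(accH P h0 d1) accD_list_profile accH_list_profile.
by rewrite /short_hospital_LD /short_hospital_LH !eqxx mem_rcons !mem_head.
Qed.
End ShortHospital.

Lemma exists_uniq_seq (T : finType) (p : pred T) k : k <= #|[pred x | p x]| ->
  exists2 s : seq T, uniq s /\ size s = k & forall x, x \in s -> p x.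
Proof.
move=> hk; exists (take k (enum [pred x | p x])).
  by rewrite take_uniq ?enum_uniq // size_takel // -cardE.
by move=> x /mem_take; rewrite mem_enum.
Qed.

Lemma exists_notin_seq (T : finType) (s : seq T) : size s < #|T| -> exists x, x \notin s.
Proof.
move=> hs; case: (pickP [pred x | x \notin s]) => [x xs|none]; first by exists x.
have : #|T| <= #|s| by apply/subset_leq_card/subsetP => x _; move: (none x) => /= /negbFE.
by move/leq_trans/(_ (card_size s)); rewrite leqNgt hs.
Qed.

Lemma card_predC1_all (T : finType) (p : pred T) (x0 : T) :
  (forall x, p x) -> #|[pred x | (x != x0) && p x]| = #|T|.-1.
Proof. by move=> pT; rewrite -(cardC1 x0); apply: eq_card => x; rewrite !inE pT andbT. Qed.

Section Necessity.
Variables (D H : finType) (iota : H -> nat) (kappa : D -> nat).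
Hypothesis adequate_all : globally_adequate iota kappa.

Lemma short_doctor_few_busy_hospitals d0 :
  kappa d0 < #|H| -> kappa d0 <= #|[pred d | (d != d0) && (0 < kappa d)]| ->
  #|[pred h | 1 < iota h]| < kappa d0.
Proof.
move=> small many_e; rewrite ltnNge; apply/negP => many_g.
have [gs [gs_uniq size_gs] iota_gs] := exists_uniq_seq many_g.
have [es [es_uniq size_es] es_props] := exists_uniq_seq many_e.
have [h0 h0_gs] : exists h0, h0 \notin gs by apply: exists_notin_seq; rewrite size_gs.
have d0_es : d0 \notin es by apply/negP => /es_props; rewrite eqxx.
have kappa_es e : e \in es -> 0 < kappa e by case/es_props/andP.
apply: (short_doctor_not_adequate gs_uniq size_gs h0_gs es_uniq size_es d0_es iota_gs kappa_es).
exact: adequate_all.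
Qed.

Lemma short_hospital_few_busy_doctors h0 :
  iota h0 < #|D| -> iota h0 <= #|[pred h | (h != h0) && (0 < iota h)]| ->
  #|[pred d | 1 < kappa d]| < iota h0.
Proof.
move=> small many_c; rewrite ltnNge; apply/negP => many_f.
have [fs [fs_uniq size_fs] kappa_fs] := exists_uniq_seq many_f.
have [cs [cs_uniq size_cs] cs_props] := exists_uniq_seq many_c.
have [d1 d1_fs] : exists d1, d1 \notin fs by apply: exists_notin_seq; rewrite size_fs.
have h0_cs : h0 \notin cs by apply/negP => /cs_props; rewrite eqxx.
have iota_cs c : c \in cs -> 0 < iota c by case/cs_props/andP.
apply: (short_hospital_not_adequate fs_uniq size_fs d1_fs cs_uniq size_cs h0_cs kappa_fs iota_cs).
exact: adequate_all.
Qed.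

Lemma globally_adequate_kappa_gt0 d : 0 < #|H| -> 0 < kappa d.
Proof.
move=> H_gt0; rewrite lt0n; apply/eqP => k0.
by have := @short_doctor_few_busy_hospitals d; rewrite k0 => /(_ H_gt0 isT).
Qed.

Lemma globally_adequate_iota_gt0 h : 0 < #|D| -> 0 < iota h.
Proof.
move=> D_gt0; rewrite lt0n; apply/eqP => i0.
by have := @short_hospital_few_busy_doctors h; rewrite i0 => /(_ D_gt0 isT).
Qed.
End Necessity.

Lemma unit_capacities_of_short (X Y : finType) (a : X -> nat) (b : Y -> nat) n :
  1 < n -> n <= #|Y| -> (forall x, 0 < a x) -> (forall y, 0 < b y) ->
  (forall x, a x < n -> #|[pred y | 1 < b y]| < a x) ->
  (forall y, b y < n -> #|[pred x | 1 < a x]| < b y) ->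
  forall x0, a x0 < n -> (forall x, a x = 1) /\ (forall y, b y = 1).
Proof.
move=> n_gt1 nY a_pos b_pos short_a short_b x0 a_x0.
have unit_of_none (T : finType) (c : T -> nat) :
    (forall t, 0 < c t) -> #|[pred t | 1 < c t]| < 1 -> forall t, c t = 1.
  move=> c_pos; rewrite ltnS leqn0 => /eqP/card0_eq none t.
  by apply/eqP; rewrite eqn_leq c_pos leqNgt andbT; move: (none t); rewrite !inE => ->.
have [y0 b_y0] : exists y0, b y0 <= 1.
  case: (pickP (fun y => b y <= 1)) => [y0 ?|big]; first by exists y0.
  have := short_a x0 a_x0; rewrite eq_cardT => [|y]; last by rewrite !inE ltnNge big.
  by rewrite -cardT ltnNge (leq_trans (ltnW a_x0) nY).
have a1 := unit_of_none _ _ a_pos (leq_trans (short_b y0 (leq_ltn_trans b_y0 n_gt1)) b_y0).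
by split=> //; apply: unit_of_none b_pos _; move: (short_a x0 a_x0); rewrite a1.
Qed.

Theorem proposition1 (D H : finType) (iota : H -> nat) (kappa : D -> nat) :
  1 < #|D| -> 1 < #|H| ->
  globally_adequate iota kappa <->
  ((forall d, kappa d = 1) /\ (forall h, iota h = 1)) \/
  ((forall d, minn #|D| #|H| <= kappa d) /\ (forall h, minn #|D| #|H| <= iota h)).
Proof.
move=> D_gt1 H_gt1; split; last first.
  case=> [[k1 i1]|[kn iN]] P; first exact: adequate_of_unit_capacities.
  exact: adequate_of_capacities_ge_min.
move=> adequate_all; set n := minn #|D| #|H|.
have n_gt1 : 1 < n by rewrite leq_min D_gt1 H_gt1.
have nD : n <= #|D| := geq_minl _ _.
have nH : n <= #|H| := geq_minr _ _.
have kappa_pos d := globally_adequate_kappa_gt0 adequate_all d (ltnW H_gt1).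
have iota_pos h := globally_adequate_iota_gt0 adequate_all h (ltnW D_gt1).
have short_d d : kappa d < n -> #|[pred h | 1 < iota h]| < kappa d.
  move=> kn; apply: (short_doctor_few_busy_hospitals adequate_all); first exact: leq_trans kn nH.
  by rewrite card_predC1_all //; move: (leq_trans kn nD); case: #|D|.
have short_h h : iota h < n -> #|[pred d | 1 < kappa d]| < iota h.
  move=> hn; apply: (short_hospital_few_busy_doctors adequate_all); first exact: leq_trans hn nD.
  by rewrite card_predC1_all //; move: (leq_trans hn nH); case: #|H|.
have [d /= dn|long_d] := pickP (fun d => kappa d < n).
  by left; exact: (unit_capacities_of_short n_gt1 nH kappa_pos iota_pos short_d short_h dn).
have [h /= hn|long_h] := pickP (fun h => iota h < n).
  by left; have [] := unit_capacities_of_short n_gt1 nD iota_pos kappa_pos short_h short_d hn.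
by right; split=> x; rewrite leqNgt ?long_d ?long_h.
Qed.
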